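(* Let $K$ be a field and $S=\langle x_1,\ldots,x_n\rangle$ a right non-degenerate semigroup of skew type, $X=\{x_1,\ldots,x_n\}$. Then: (1) for each integer $i$ with $1\le i\le n$, the set $S_i=\bigcup_{Y\subseteq X,\,|Y|=i}S_Y$ is an ideal of $S$, and $S_X=S_n\subseteq S_{n-1}\subseteq\cdots\subseteq S_1\subseteq S$; (2) $S$ is the union of sets of the form $\{y_1^{a_1}\cdots y_k^{a_k}\mid a_i\ge0\}$, where $y_1,\ldots,y_k\in X$ and $k\le n$. In particular, $\mathrm{GK}(K[S])\le n$.
   Context: A semigroup of skew type is a monoid $S$ with a monoid presentation $S=\langle x_1,\ldots,x_n \mid x_ix_j=x_kx_l\rangle$ consisting of $\binom{n}{2}$ relations, each of the form $x_ix_j=x_kx_l$ with $i\neq j$, $k\neq l$, such that every word $x_px_q$ with $p\neq q$ appears (as one side) in exactly one of the relations. For $a,b\in X$, the partner of $ab$ is the other side of the unique defining relation containing $ab$ if $a\neq b$, and $ab$ itself if $a=b$. $S$ is right non-degenerate if for every $x\in X$ the map $X\to X$ sending $y$ to the first letter of the partner of $xy$ is surjective. For $Y\subseteq X$, $S_Y=\bigcap_{y\in Y}yS$. $\mathrm{GK}$ is Gelfand–Kirillov dimension. *)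

From mathcomp Require Import all_boot.
Set Implicit Arguments. Unset Strict Implicit. Unset Printing Implicit Defensive.

(* Generators X = {x_1,...,x_n} are represented by 'I_n; words of the free
   monoid by seq 'I_n.  A presentation of skew type is encoded by its
   "partner" function: partner i j = (k,l) means that the defining relation
   containing x_i x_j is x_i x_j = x_k x_l (and partner i i = (i,i)). *)

Definition skew_type (n : nat) (partner : 'I_n -> 'I_n -> 'I_n * 'I_n) : Prop :=
  forall i j : 'I_n,
    (i = j -> partner i j = (i, i)) /\
    (i <> j ->
       (partner i j).1 <> (partner i j).2 /\
       partner i j <> (i, j) /\
       partner (partner i j).1 (partner i j).2 = (i, j)).

Definition right_nondegenerate (n : nat) (partner : 'I_n -> 'I_n -> 'I_n * 'I_n) : Prop :=
  forall x z : 'I_n, exists y : 'I_n, (partner x y).1 = z.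

(* The congruence on words generated by the defining relations;
   S = (free monoid on 'I_n) / weq. *)
Inductive weq (n : nat) (partner : 'I_n -> 'I_n -> 'I_n * 'I_n) :
    seq 'I_n -> seq 'I_n -> Prop :=
  | weq_refl u : weq partner u u
  | weq_sym u v : weq partner u v -> weq partner v u
  | weq_trans u v w : weq partner u v -> weq partner v w -> weq partner u w
  | weq_step u1 u2 a b :
      weq partner (u1 ++ [:: a; b] ++ u2)
                  (u1 ++ [:: (partner a b).1; (partner a b).2] ++ u2).

(* a subset of S given as a predicate on words (assumed weq-closed where relevant) *)
Definition is_ideal (n : nat) (partner : 'I_n -> 'I_n -> 'I_n * 'I_n)
    (I : seq 'I_n -> Prop) : Prop :=
  (exists w, I w) /\
  (forall w u v, I w -> I (u ++ w ++ v)).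

Definition in_left_ideal (n : nat) (partner : 'I_n -> 'I_n -> 'I_n * 'I_n)
    (y : 'I_n) (w : seq 'I_n) : Prop :=
  exists v, weq partner w (y :: v).

Definition in_SY (n : nat) (partner : 'I_n -> 'I_n -> 'I_n * 'I_n)
    (Y : {set 'I_n}) (w : seq 'I_n) : Prop :=
  forall y, y \in Y -> in_left_ideal partner y w.

Definition in_Si (n : nat) (partner : 'I_n -> 'I_n -> 'I_n * 'I_n)
    (i : nat) (w : seq 'I_n) : Prop :=
  exists Y : {set 'I_n}, #|Y| = i /\ in_SY partner Y w.

Definition power_word (n : nat) (ya : seq ('I_n * nat)) : seq 'I_n :=
  flatten [seq nseq p.2 p.1 | p <- ya].

Definition growth_le (n : nat) (partner : 'I_n -> 'I_n -> 'I_n * 'I_n)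
    (m N : nat) : Prop :=
  exists L : seq (seq 'I_n), size L <= N /\
    forall w : seq 'I_n, size w <= m -> exists2 u, u \in L & weq partner w u.

(* With V = K-span{1, x_1, ..., x_n}, V^m has as a K-basis
   the elements of S of length <= m, so dim_K V^m = d(m) and
   GK(K[S]) = limsup_m log d(m) / log m.  "limsup <= d" is expressed as:
   for every rational eps = p/q > 0, eventually d(m) <= m^(d + p/q),
   i.e. d(m)^q <= m^(d*q + p). *)
Definition GKdim_le (n : nat) (partner : 'I_n -> 'I_n -> 'I_n * 'I_n)
    (d : nat) : Prop :=
  forall p q : nat, 0 < p -> 0 < q ->
    exists M, forall m, M <= m ->
      exists N, growth_le partner m N /\ N ^ q <= m ^ (d * q + p).

From mathcomp Require Import all_boot.
From Stdlib Require Import Classical.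
Set Implicit Arguments. Unset Strict Implicit. Unset Printing Implicit Defensive.

(* Right non-degeneracy makes sigma_x : y |-> first letter of the partner of
   xy a permutation of X, and sigma_x x = x.  So if w lies in yS for every y
   in Y, then xw lies in zS for every z in sigma_x(Y), and also in xS.
   The first fact gives x S_Y in S_(sigma_x Y), hence every S_i is an ideal.
   The second bounds the number of blocks y^a of a normal form by the number
   of possible first letters: in y v, either v lies in yS, and y merges into
   the leading block of v, or the first letters Y of v exclude y, and y v has
   the |Y| + 1 first letters {y} u sigma_y(Y).  Hence a word has at most n
   blocks, and there are at most (n (m + 1))^n elements of length <= m. *)

Lemma surj_inj (T : finType) (f : T -> T) :
  (forall z, exists y, f y = z) -> injective f.
Proof.
move=> onto; have /image_injP inj_f : #|image f T| == #|T|.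
  apply/eqP/eq_card => z; apply/imageP.
  by have [y <-] := onto z; exists y.
by move=> x y; apply: inj_f.
Qed.

Lemma power_count_le n m p q : 0 < p -> (2 * n) ^ (n * q) < m ->
  ((n * m.+1) ^ n) ^ q <= m ^ (n * q + p).
Proof.
move=> p_gt0 m_big; have m_gt0 : 0 < m by apply: leq_ltn_trans m_big.
have leq_exp2r_w a b e : a <= b -> a ^ e <= b ^ e.
  by move=> le_ab; elim: e => // e IH; rewrite !expnS leq_mul.
rewrite -expnM; apply: (@leq_trans ((2 * n * m) ^ (n * q))).
  apply: leq_exp2r_w; rewrite [2 * n]mulnC -mulnA leq_mul2l.
  by rewrite mul2n -addnn -addn1 leq_add2l m_gt0 orbT.
rewrite expnMn expnD mulnC leq_mul2l; apply/orP; right.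
by rewrite (leq_trans (ltnW m_big)) // -{1}(expn1 m) leq_pexp2l.
Qed.

Section PowerWords.

Variable n : nat.
Implicit Types (ya : seq ('I_n * nat)).

Lemma power_word_exponent_le ya p : p \in ya -> p.2 <= size (power_word ya).
Proof.
elim: ya => // q ya IH; rewrite in_cons /power_word /= size_cat size_nseq.
case/orP => [/eqP-> | /IH le_p]; first exact: leq_addr.
exact: leq_trans le_p (leq_addl _ _).
Qed.

Lemma power_word_pad ya y k :
  power_word (ya ++ nseq k (y, 0)) = power_word ya.
Proof.
rewrite /power_word map_cat flatten_cat -[RHS]cats0; congr (_ ++ _).
by elim: k.
Qed.

Lemma power_word_tuple m ya :
  size ya <= n -> (forall p, p \in ya -> p.2 <= m) ->
  exists t : n.-tuple ('I_n * 'I_m.+1),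
    power_word [seq (p.1, val p.2) | p <- t] = power_word ya.
Proof.
move=> size_ya ya_le.
have [yb [size_yb <- yb_le]] : exists yb, [/\ size yb = n,
    power_word yb = power_word ya & forall p, p \in yb -> p.2 <= m].
  have [lt_ya | ge_ya] := ltnP (size ya) n; last first.
    by exists ya; split => //; apply/eqP; rewrite eqn_leq size_ya.
  exists (ya ++ nseq (n - size ya) (Ordinal lt_ya, 0)); split.
  - by rewrite size_cat size_nseq subnKC // ltnW.
  - exact: power_word_pad.
  - by move=> p; rewrite mem_cat => /orP[/ya_le // | /nseqP[-> _]].
have size_t : size [seq (p.1, (inord p.2 : 'I_m.+1)) | p <- yb] == n.
  by rewrite size_map size_yb.
exists (Tuple size_t); rewrite /= -map_comp; congr power_word.
rewrite -[RHS]map_id; apply/eq_in_map => -[y a] /yb_le /= le_a.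
by rewrite inordK.
Qed.

End PowerWords.

Section SkewType.

Variables (n : nat) (partner : 'I_n -> 'I_n -> 'I_n * 'I_n).
Implicit Types (x y z : 'I_n) (Y : {set 'I_n}) (u v w : seq 'I_n).

Lemma weq_cat u v p q :
  weq partner u v -> weq partner (p ++ u ++ q) (p ++ v ++ q).
Proof.
elim=> [w | w1 w2 _ IH | w1 w2 w3 _ IH12 _ IH23 | u1 u2 a b].
- exact: weq_refl.
- exact: weq_sym.
- exact: weq_trans IH23.
- by have := weq_step partner (p ++ u1) (u2 ++ q) a b; rewrite -!catA.
Qed.

Lemma weq_cons x u v : weq partner u v -> weq partner (x :: u) (x :: v).
Proof. by move/(weq_cat [:: x] [::]); rewrite !cats0. Qed.

Lemma weq_catr u v q : weq partner u v -> weq partner (u ++ q) (v ++ q).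
Proof. exact: weq_cat [::] q. Qed.

Lemma weq_size u v : weq partner u v -> size u = size v.
Proof.
elim=> [// | w1 w2 _ -> // | w1 w2 w3 _ -> _ -> // | u1 u2 a b].
by rewrite !size_cat.
Qed.

Definition head_partner x y : 'I_n := (partner x y).1.

Lemma in_left_ideal_self x w : in_left_ideal partner x (x :: w).
Proof. by exists w; apply: weq_refl. Qed.

Lemma in_left_ideal_cons x z w : in_left_ideal partner z w ->
  in_left_ideal partner (head_partner x z) (x :: w).
Proof.
case=> v w_zv; exists ((partner x z).2 :: v).
exact: weq_trans (weq_cons x w_zv) (weq_step partner [::] v x z).
Qed.

Lemma in_SY_weq Y w w' :
  weq partner w w' -> in_SY partner Y w -> in_SY partner Y w'.
Proof.
move=> ww' w_Y y /w_Y [v w_yv]; exists v.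
exact: weq_trans (weq_sym ww') w_yv.
Qed.

Lemma in_SY_sub (Y Z : {set 'I_n}) w :
  Z \subset Y -> in_SY partner Y w -> in_SY partner Z w.
Proof. by move=> /subsetP sZY w_Y y /sZY; apply: w_Y. Qed.

Lemma in_SY_catr Y w v : in_SY partner Y w -> in_SY partner Y (w ++ v).
Proof.
by move=> w_Y y /w_Y [t w_yt]; exists (t ++ v); exact: weq_catr v w_yt.
Qed.

Lemma in_SY_cons x Y w :
  in_SY partner Y w -> in_SY partner (head_partner x @: Y) (x :: w).
Proof. by move=> w_Y _ /imsetP[z /w_Y w_z ->]; apply: in_left_ideal_cons. Qed.

Lemma in_SY_setU1_cons x Y w :
  in_SY partner Y w -> in_SY partner (x |: head_partner x @: Y) (x :: w).
Proof.
move=> w_Y y; rewrite in_setU1 => /orP[/eqP-> | ].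
- exact: in_left_ideal_self.
- exact: in_SY_cons.
Qed.

Lemma in_SiS i w : in_Si partner i.+1 w -> in_Si partner i w.
Proof.
case=> Y [card_Y w_Y]; have /card_gt0P [y y_Y] : 0 < #|Y| by rewrite card_Y.
exists (Y :\ y); split; last by apply: in_SY_sub w_Y; apply: subD1set.
by have := cardsD1 y Y; rewrite y_Y card_Y add1n => -[].
Qed.

Lemma in_SY_setT w : in_SY partner [set: 'I_n] w <-> in_Si partner n w.
Proof.
split=> [w_X | [Y [card_Y w_Y]]]; first by exists setT; rewrite cardsT card_ord.
have Y_T : Y = [set: 'I_n].
  by apply/eqP; rewrite eqEcard subsetT cardsT card_ord card_Y leqnn.
by rewrite -Y_T.
Qed.

Hypothesis skew : skew_type partner.
Hypothesis nondeg : right_nondegenerate partner.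

Lemma head_partner_inj x : injective (head_partner x).
Proof. exact/surj_inj/nondeg. Qed.

Lemma head_partner_id x : head_partner x x = x.
Proof. by rewrite /head_partner (proj1 (skew x x)). Qed.

Lemma card_head_partner Y x : #|head_partner x @: Y| = #|Y|.
Proof. exact/card_imset/head_partner_inj. Qed.

Lemma card_head_partner_setU1 Y x :
  x \notin Y -> #|x |: head_partner x @: Y| = #|Y|.+1.
Proof.
move=> xNY; rewrite cardsU1 card_head_partner -{1}(head_partner_id x).
by rewrite mem_imset ?xNY //; apply: head_partner_inj.
Qed.

Lemma in_Si_cat i u w v : in_Si partner i w -> in_Si partner i (u ++ w ++ v).
Proof.
case=> Y [card_Y /(in_SY_catr v) wv_Y].
elim: u => [| x u [Z [card_Z uwv_Z]]]; first by exists Y.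
exists (head_partner x @: Z); split; first by rewrite card_head_partner.
exact: in_SY_cons.
Qed.

Lemma in_Si_exists i : i <= n -> exists w, in_Si partner i w.
Proof.
elim: i => [_ | i IH lt_i_n].
  by exists [::], set0; split=> [|y]; rewrite ?cards0 ?inE.
have [w [Y [card_Y w_Y]]] := IH (ltnW lt_i_n).
have [x _ xNY] : exists2 x, x \in [set: 'I_n] & x \notin Y.
  apply/subsetPn; apply: contraTN lt_i_n => /subset_leq_card.
  by rewrite cardsT card_ord card_Y -leqNgt.
exists (x :: w), (x |: head_partner x @: Y); split.
- by rewrite card_head_partner_setU1 // card_Y.
- exact: in_SY_setU1_cons.
Qed.

Lemma is_ideal_in_Si i : i <= n -> is_ideal partner (in_Si partner i).
Proof.
by move=> le_i_n; split=> [| w u v]; [apply: in_Si_exists | apply: in_Si_cat].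
Qed.

Lemma weq_power_word_cons k y v : size v <= k ->
  exists a rest Y,
    [/\ weq partner (y :: v) (power_word ((y, a.+1) :: rest)),
        in_SY partner Y (y :: v) & size rest < #|Y|].
Proof.
elim: k y v => [| k IH] y [| z v] //= le_v_k.
1,2: exists 0, [::], [set y]; split; rewrite ?cards1 //; first exact: weq_refl.
1,2: by move=> _ /set1P->; apply: in_left_ideal_self.
have [[t zv_yt] | zvNy] := classic (in_left_ideal partner y (z :: v)).
  have le_t_k : size t <= k by move: (weq_size zv_yt) le_v_k => /= [<-].
  have [a [rest [Y [yt_pw yt_Y size_rest]]]] := IH y t le_t_k.
  have yzv_yyt := weq_cons y zv_yt.
  exists a.+1, rest, (head_partner y @: Y).
  rewrite card_head_partner; split=> //.
  - exact: weq_trans yzv_yyt (weq_cons y yt_pw).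
  - exact: in_SY_weq (weq_sym yzv_yyt) (in_SY_cons yt_Y).
have [a [rest [Y [zv_pw zv_Y size_rest]]]] := IH z v le_v_k.
have yNY : y \notin Y by apply/negP => /zv_Y.
exists 0, ((z, a.+1) :: rest), (y |: head_partner y @: Y).
rewrite card_head_partner_setU1 //; split=> //.
- exact: weq_cons.
- exact: in_SY_setU1_cons.
Qed.

Lemma weq_power_word w :
  exists ya, size ya <= n /\ weq partner w (power_word ya).
Proof.
case: w => [| y v]; first by exists [::]; split; last apply: weq_refl.
have [a [rest [Y [yv_pw _ size_rest]]]] :=
  weq_power_word_cons y (leqnn (size v)).
exists ((y, a.+1) :: rest); split=> //.
by rewrite (leq_trans size_rest) // (leq_trans (max_card _)) ?card_ord.
Qed.

Lemma growth_le_power_words m : growth_le partner m ((n * m.+1) ^ n).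
Proof.
exists [seq power_word [seq (p.1, val p.2) | p <- val t]
       | t <- enum {: n.-tuple ('I_n * 'I_m.+1)}]; split.
  by rewrite size_map -cardE card_tuple card_prod !card_ord.
move=> w size_w; have [ya [size_ya w_ya]] := weq_power_word w.
have ya_le p : p \in ya -> p.2 <= m.
  by move/power_word_exponent_le/leq_trans; apply; rewrite -(weq_size w_ya).
have [t t_ya] := power_word_tuple size_ya ya_le.
by exists (power_word ya); rewrite // -t_ya; apply/map_f; rewrite mem_enum.
Qed.

Lemma GKdim_le_n : GKdim_le partner n.
Proof.
move=> p q p_gt0 _; exists ((2 * n) ^ (n * q)).+1 => m m_big.
exists ((n * m.+1) ^ n); split; first exact: growth_le_power_words.
exact: power_count_le.
Qed.

End SkewType.

Theorem theorem4p1 (n : nat) (partner : 'I_n -> 'I_n -> 'I_n * 'I_n) :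
  skew_type partner -> right_nondegenerate partner ->
  (* (1) *)
  ((forall i, 1 <= i <= n -> is_ideal partner (in_Si partner i)) /\
   (forall w, in_SY partner [set: 'I_n] w <-> in_Si partner n w) /\
   (forall i w, 1 <= i < n -> in_Si partner i.+1 w -> in_Si partner i w)) /\
  (* (2) *)
  (forall w : seq 'I_n, exists ya : seq ('I_n * nat),
      size ya <= n /\ weq partner w (power_word ya)) /\
  (* in particular *)
  GKdim_le partner n.
Proof.
move=> skew nondeg; split; [split; [|split] | split].
- by move=> i /andP[_ le_i_n]; apply: is_ideal_in_Si.
- exact: in_SY_setT.
- by move=> i w _; apply: in_SiS.
- exact: weq_power_word.
- exact: GKdim_le_n.
Qed.
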